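(* Let $n$ be even, $1\le\kappa<n$ and $d\ge1$. Let $\mathcal{C}_1\subseteq\{0,1\}^n$ be a balanced binary code of length $n$ with minimum Hamming distance $d$ and of maximum size among such codes, and let $\mathcal{C}_2\subseteq\{0,1\}^n$ be a binary $\kappa$-WMU code of length $n$ with minimum Hamming distance $d$. Let $\mathcal{C}=\{\Psi(\mathbf{a},\mathbf{b}):\mathbf{a}\in\mathcal{C}_1,\mathbf{b}\in\mathcal{C}_2\}\subseteq\{\mathtt{A},\mathtt{T},\mathtt{C},\mathtt{G}\}^n$. Then $\mathcal{C}$ is a $\kappa$-WMU code, $\mathcal{C}$ is balanced, and the minimum Hamming distance of $\mathcal{C}$ is at least $d$.
   Context: $\Psi(\mathbf{a},\mathbf{b})=(c_1,\dots,c_n)$ with $c_i=\mathtt{A},\mathtt{T},\mathtt{C},\mathtt{G}$ according as $(a_i,b_i)=(0,0),(0,1),(1,0),(1,1)$. A binary sequence of length $n$ is balanced if exactly $n/2$ entries are $1$; a DNA sequence of length $n$ is balanced if exactly $n/2$ entries lie in $\{\mathtt{G},\mathtt{C}\}$; a code is balanced if every codeword is. A code $\mathcal{C}$ of length $n$ is $\kappa$-WMU if for all not necessarily distinct $\mathbf{a},\mathbf{b}\in\mathcal{C}$ and all $\kappa\le l<n$, $(a_1,\dots,a_l)\ne(b_{n-l+1},\dots,b_n)$. *)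

From HB Require Import structures.
From mathcomp Require Import all_boot.
Set Implicit Arguments. Unset Strict Implicit. Unset Printing Implicit Defensive.

Inductive nt := A | T | C | G.

Definition nt_to (x : nt) : bool * bool :=
  match x with A => (false, false) | T => (false, true)
             | C => (true, false) | G => (true, true) end.
Definition nt_of (p : bool * bool) : nt :=
  match p with (false, false) => A | (false, true) => T
             | (true, false) => C | (true, true) => G end.
Lemma nt_toK : cancel nt_to nt_of. Proof. by case. Qed.
HB.instance Definition _ := Finite.copy nt (can_type nt_toK).

Definition psi1 (a b : bool) : nt :=
  match a, b with false, false => A | false, true => T
                | true, false => C | true, true => G end.
Definition Psi n (a b : n.-tuple bool) : n.-tuple nt :=
  [tuple psi1 (tnth a i) (tnth b i) | i < n].

Definition hamming (X : eqType) n (x y : n.-tuple X) : nat :=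
  count (fun p => p.1 != p.2) (zip x y).

Definition min_dist_ge (X : finType) n (Cd : {set n.-tuple X}) (d : nat) : Prop :=
  forall x y, x \in Cd -> y \in Cd -> x != y -> d <= hamming x y.

Definition bin_balanced n (x : n.-tuple bool) : bool := count id x == n %/ 2.
Definition bin_balanced_code n (Cd : {set n.-tuple bool}) : Prop :=
  forall x, x \in Cd -> bin_balanced x.

Definition dna_balanced n (x : n.-tuple nt) : bool :=
  count (fun c => (c == G) || (c == C)) x == n %/ 2.
Definition dna_balanced_code n (Cd : {set n.-tuple nt}) : Prop :=
  forall x, x \in Cd -> dna_balanced x.

Definition WMU (X : finType) n (kappa : nat) (Cd : {set n.-tuple X}) : Prop :=
  forall a b, a \in Cd -> b \in Cd -> forall l, kappa <= l < n ->
    take l a != drop (n - l) b.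

(** Reading off the first (resp. second) bit of each letter of [Psi a b]
    recovers [a] (resp. [b]).  So the GC-content of [Psi a b] is the weight of
    [a]; an overlap between two words of the product code projects to an
    overlap between their second components in [C2]; and two distinct
    codewords differ in one of their components, whose Hamming distance is at
    most that of the codewords since projecting letters cannot create
    mismatches. *)

From HB Require Import structures.
From mathcomp Require Import all_boot.
Set Implicit Arguments. Unset Strict Implicit. Unset Printing Implicit Defensive.

Definition nt_fst (c : nt) : bool := (nt_to c).1.
Definition nt_snd (c : nt) : bool := (nt_to c).2.

Lemma Psi_fst n (a b : n.-tuple bool) : map_tuple nt_fst (Psi a b) = a.
Proof.
apply: eq_from_tnth => i; rewrite tnth_map tnth_mktuple.
by case: (tnth a i); case: (tnth b i).
Qed.

Lemma Psi_snd n (a b : n.-tuple bool) : map_tuple nt_snd (Psi a b) = b.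
Proof.
apply: eq_from_tnth => i; rewrite tnth_map tnth_mktuple.
by case: (tnth a i); case: (tnth b i).
Qed.

Lemma hamming_map_tuple (X Y : eqType) (f : X -> Y) n (x y : n.-tuple X) :
  hamming (map_tuple f x) (map_tuple f y) <= hamming x y.
Proof.
rewrite /hamming /=; elim: (val x) (val y) => [|u s IHs] [|v t] //=.
apply: leq_add; last exact: IHs.
by case: (eqVneq u v) => [->|]; rewrite ?eqxx // leq_b1.
Qed.

Lemma WMU_pullback (X Y : finType) (f : X -> Y) n kappa
    (Cd : {set n.-tuple X}) (C' : {set n.-tuple Y}) :
  {in Cd, forall x, map_tuple f x \in C'} -> WMU kappa C' -> WMU kappa Cd.
Proof.
move=> fCd wC' x y xCd yCd l hl; apply: contra (wC' _ _ (fCd x xCd) (fCd y yCd) l hl).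
by move/eqP=> overlap; rewrite /= -map_take -map_drop overlap.
Qed.

Section ProductCode.

Variables (n : nat) (C1 C2 : {set n.-tuple bool}).

Let Cd := [set Psi a b | a in C1, b in C2].

Lemma WMU_Psi kappa : WMU kappa C2 -> WMU kappa Cd.
Proof.
apply: (WMU_pullback (f := nt_snd)) => _ /imset2P [a b _ bC2 ->].
by rewrite Psi_snd.
Qed.

Lemma dna_balanced_Psi (a b : n.-tuple bool) :
  dna_balanced (Psi a b) = bin_balanced a.
Proof.
rewrite /dna_balanced /bin_balanced -[in RHS](Psi_fst a b).
by rewrite (count_map nt_fst id (Psi a b)); congr (_ == _); apply: eq_count => -[].
Qed.

Lemma dna_balanced_code_Psi :
  bin_balanced_code C1 -> dna_balanced_code Cd.
Proof.
by move=> bal1 _ /imset2P [a b aC1 _ ->]; rewrite dna_balanced_Psi bal1.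
Qed.

Lemma min_dist_ge_Psi d :
  min_dist_ge C1 d -> min_dist_ge C2 d -> min_dist_ge Cd d.
Proof.
move=> md1 md2 _ _ /imset2P [a b aC1 bC2 ->] /imset2P [a' b' aC1' bC2' ->].
have [<- neq | neq_a _] := eqVneq a a'.
- have neq_b : b != b' by apply: contraNneq neq => ->.
  apply: leq_trans (md2 _ _ bC2 bC2' neq_b) _.
  by have := hamming_map_tuple nt_snd (Psi a b) (Psi a b'); rewrite !Psi_snd.
- apply: leq_trans (md1 _ _ aC1 aC1' neq_a) _.
  by have := hamming_map_tuple nt_fst (Psi a b) (Psi a' b'); rewrite !Psi_fst.
Qed.

End ProductCode.

Theorem lemma6 (n kappa d : nat) (C1 C2 : {set n.-tuple bool}) :
  ~~ odd n -> 1 <= kappa < n -> 1 <= d ->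
  bin_balanced_code C1 -> min_dist_ge C1 d ->
  (forall C' : {set n.-tuple bool},
      bin_balanced_code C' -> min_dist_ge C' d -> #|C'| <= #|C1|) ->
  WMU kappa C2 -> min_dist_ge C2 d ->
  let Cd := [set Psi a b | a in C1, b in C2] in
  [/\ WMU kappa Cd, dna_balanced_code Cd & min_dist_ge Cd d].
Proof.
move=> _ _ _ bal1 md1 _ wmu2 md2 Cd; split.
- exact: WMU_Psi.
- exact: dna_balanced_code_Psi.
- exact: min_dist_ge_Psi.
Qed.
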